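(* Let $\omega_0>0$ and $\gamma>0$, and consider the control system on $SU(2)\times SU(2)$ $$\dot X_1(t)=-i\big(\omega_0 S_z+u_x(t)S_x+u_y(t)S_y+u_z(t)S_z\big)X_1(t),\qquad X_1(0)=I,$$ $$\dot X_2(t)=-i\big(-\omega_0 S_z+u_x(t)S_x+u_y(t)S_y+u_z(t)S_z\big)X_2(t),\qquad X_2(0)=I,$$ with admissible controls satisfying $u_x^2+u_y^2+u_z^2\le\gamma^2$ for all $t$. Let $X_f,\hat X_f\in SU(2)$ satisfy $\hat X_f=e^{i\varphi S_z}X_fe^{-i\varphi S_z}$ for some $\varphi\in\mathbb{R}$. Suppose an admissible control $(u_x,u_y,u_z)$ steers the system so that $X_1(t_f)=\pm X_f$ and $X_2(t_f)=\pm X_f$ (some choice of signs). Then there is an admissible control $(\hat u_x,\hat u_y,\hat u_z)$, with $\hat u_x^2+\hat u_y^2+\hat u_z^2\le\gamma^2$, that steers the system in the same time $t_f$ so that $X_1(t_f)=\pm\hat X_f$ and $X_2(t_f)=\pm\hat X_f$.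
   Context: $S_k=\frac12\sigma_k$ for $k=x,y,z$, where $\sigma_x,\sigma_y,\sigma_z$ are the Pauli matrices $\sigma_x=\begin{pmatrix}0&1\\1&0\end{pmatrix}$, $\sigma_y=\begin{pmatrix}0&-i\\i&0\end{pmatrix}$, $\sigma_z=\begin{pmatrix}1&0\\0&-1\end{pmatrix}$; $I$ is the $2\times 2$ identity. Controls are measurable real functions of time. *)

From mathcomp Require Import all_boot all_order all_algebra.
From mathcomp Require Import all_classical all_reals all_analysis.
From mathcomp Require Import complex.
Set Implicit Arguments. Unset Strict Implicit. Unset Printing Implicit Defensive.
Import GRing.Theory Num.Theory.
Local Open Scope ring_scope.
Local Open Scope complex_scope.

Definition sigma_x (R : realType) : 'M[R[i]]_2 :=
  \matrix_(i < 2, j < 2) (if i == j then 0 else 1).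
Definition sigma_y (R : realType) : 'M[R[i]]_2 :=
  \matrix_(i < 2, j < 2)
    (if i == j then 0 else if (val i == 0)%N then - 'i else 'i).
Definition sigma_z (R : realType) : 'M[R[i]]_2 :=
  \matrix_(i < 2, j < 2)
    (if i == j then (if (val i == 0)%N then 1 else -1) else 0).

Definition S_x (R : realType) : 'M[R[i]]_2 := 2^-1 *: sigma_x R.
Definition S_y (R : realType) : 'M[R[i]]_2 := 2^-1 *: sigma_y R.
Definition S_z (R : realType) : 'M[R[i]]_2 := 2^-1 *: sigma_z R.

Definition generator (R : realType) (w : R) (ux uy uz : R -> R) (t : R)
  : 'M[R[i]]_2 :=
  - 'i *: ((w%:C) *: S_z R + (ux t)%:C *: S_x R + (uy t)%:C *: S_y R
           + (uz t)%:C *: S_z R).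

Definition cintegrable (R : realType) (a b : R) (f : R -> R[i]) : Prop :=
  (lebesgue_measure).-integrable `[a, b] (EFin \o (fun s => @complex.Re R (f s))) /\
  (lebesgue_measure).-integrable `[a, b] (EFin \o (fun s => @complex.Im R (f s))).

Definition cintegral (R : realType) (a b : R) (f : R -> R[i]) : R[i] :=
  (Rintegral lebesgue_measure `[a, b] (fun s => @complex.Re R (f s)))
  +i* (Rintegral lebesgue_measure `[a, b] (fun s => @complex.Im R (f s))).

(* X is a (Caratheodory) solution on [0, tf] of  X' = A(t) X, X(0) = I,
   i.e. X(t) = I + \int_0^t A(s) X(s) ds entrywise, integrand integrable. *)
Definition is_solution (R : realType) (A : R -> 'M[R[i]]_2) (tf : R)
  (X : R -> 'M[R[i]]_2) : Prop :=
  forall t : R, 0 <= t <= tf -> forall i j : 'I_2,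
    cintegrable 0 t (fun s => (A s *m X s) i j) /\
    X t i j = (1 : 'M[R[i]]_2) i j + cintegral 0 t (fun s => (A s *m X s) i j).

Definition admissible (R : realType) (gamma : R) (ux uy uz : R -> R) : Prop :=
  measurable_fun setT ux /\ measurable_fun setT uy /\ measurable_fun setT uz /\
  forall t : R, ux t ^+ 2 + uy t ^+ 2 + uz t ^+ 2 <= gamma ^+ 2.

Definition adj_mx (R : realType) (X : 'M[R[i]]_2) : 'M[R[i]]_2 :=
  map_mx (@conjc R) X^T.
Definition SU2 (R : realType) (X : 'M[R[i]]_2) : Prop :=
  X *m adj_mx X = 1 /\ \det X = 1.

(* e^{i phi S_z} = diag(e^{i phi/2}, e^{-i phi/2}) (S_z is diagonal) *)
Definition expiSz (R : realType) (phi : R) : 'M[R[i]]_2 :=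
  \matrix_(i < 2, j < 2)
    (if i == j then
       (if (val i == 0)%N then cos (phi / 2) +i* sin (phi / 2)
        else cos (phi / 2) -i* sin (phi / 2))
     else 0).

(* Conjugation by U = e^{i phi S_z} fixes S_z and rotates the pair (S_x, S_y) by the
   angle phi.  Hence if X solves X' = -i(+-w0 S_z + u.S) X, then U X U^-1 solves the
   same equation with the control (ux, uy) rotated by phi in its plane, a rotation
   that preserves the bound ux^2 + uy^2 + uz^2 <= gamma^2; at time tf it ends at
   +-U Xf U^-1 = +-Xfh.  U is diagonal, so conjugation acts entrywise by constant
   factors and commutes with the entrywise integral equation defining solutions. *)

From mathcomp Require Import all_boot all_order all_algebra.
From mathcomp Require Import all_classical all_reals all_analysis.
From mathcomp Require Import complex.
From mathcomp Require Import ring measurable_realfun.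
Set Implicit Arguments. Unset Strict Implicit. Unset Printing Implicit Defensive.
Import GRing.Theory Num.Theory.
Local Open Scope ring_scope.
Local Open Scope complex_scope.

Section RealLinearCombination.
Context d (T : measurableType d) (R : realType) (mu : {measure set T -> \bar R}).
Variables (D : set T) (g h : T -> R).
Hypotheses (mD : measurable D)
  (ig : mu.-integrable D (EFin \o g)) (ih : mu.-integrable D (EFin \o h)).

Lemma integrable_lincomb (p q : R) :
  mu.-integrable D (EFin \o (fun x => p * g x + q * h x)).
Proof.
exact (integrableD mD (integrableZl mD p ig) (integrableZl mD q ih)).
Qed.

Lemma Rintegral_lincomb (p q : R) :
  \int[mu]_(x in D) (p * g x + q * h x) =
  p * \int[mu]_(x in D) g x + q * \int[mu]_(x in D) h x.
Proof.
rewrite RintegralD ?RintegralZl //.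
  exact (integrableZl mD p ig).
exact (integrableZl mD q ih).
Qed.

End RealLinearCombination.

Section ComplexIntegral.
Variables (R : realType) (a b : R) (f : R -> R[i]) (k : R[i]).
Hypothesis intf : cintegrable a b f.

Let Re_mulE : (fun s => complex.Re (k * f s)) =
  (fun s => complex.Re k * complex.Re (f s) + - complex.Im k * complex.Im (f s)).
Proof. by apply/funext => s; case: k => ? ?; case: (f s) => ? ?; rewrite /= mulNr. Qed.

Let Im_mulE : (fun s => complex.Im (k * f s)) =
  (fun s => complex.Re k * complex.Im (f s) + complex.Im k * complex.Re (f s)).
Proof. by apply/funext => s; case: k => ? ?; case: (f s). Qed.

Lemma cintegrableZl : cintegrable a b (fun s => k * f s).
Proof.
have mD := measurable_itv `[a, b]; case: intf => intRe intIm.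
by rewrite /cintegrable Re_mulE Im_mulE; split; apply: integrable_lincomb.
Qed.

Lemma cintegralZl : cintegral a b (fun s => k * f s) = k * cintegral a b f.
Proof.
have mD := measurable_itv `[a, b]; case: intf => intRe intIm.
rewrite /cintegral Re_mulE Im_mulE !Rintegral_lincomb //.
by case: k => p q /=; congr (_ +i* _); ring.
Qed.

End ComplexIntegral.

Section DiagonalConjugation.
Variable R : realType.

Lemma conj_diag_mxE n (d d' : 'rV[R[i]]_n) (M : 'M[R[i]]_n) i j :
  (diag_mx d *m M *m diag_mx d') i j = d 0 i * M i j * d' 0 j.
Proof. by rewrite mul_mx_diag mul_diag_mx !mxE. Qed.

Lemma is_solution_conj_diag (d d' : 'rV[R[i]]_2) (A B : R -> 'M[R[i]]_2) tf X :
  (forall k, d 0 k * d' 0 k = 1) ->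
  (forall t, B t = diag_mx d *m A t *m diag_mx d') ->
  is_solution A tf X ->
  is_solution B tf (fun t => diag_mx d *m X t *m diag_mx d').
Proof.
move=> dd' BE solX t ht i j; have [intAX XE] := solX t ht i j.
have d'd : diag_mx d' *m diag_mx d = 1.
  by apply/matrixP => k l; rewrite mul_diag_mx !mxE mulrnAr mulrC dd'.
have BXE : (fun s => (B s *m (diag_mx d *m X s *m diag_mx d')) i j) =
           (fun s => d 0 i * d' 0 j * (A s *m X s) i j).
  apply/funext => s; rewrite BE !mulmxA -(mulmxA _ (diag_mx d')) d'd mulmx1.
  by rewrite -(mulmxA (diag_mx d)) conj_diag_mxE mulrAC.
split; rewrite BXE; first exact: cintegrableZl.
rewrite cintegralZl // conj_diag_mxE XE !mxE.
case: eqVneq => [<-|_] /=; last by ring.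
by rewrite mulrAC !dd' !mul1r.
Qed.

End DiagonalConjugation.

(* Stated for an abstract linear map, with [Z] occurring twice as [S_z] does in
   [generator]: rewriting with the concrete Pauli matrices in place makes
   unification unfold them, which is prohibitively slow. *)
Lemma rotate_xy_lincomb (K : comNzRingType) (V : lmodType K) (L : V -> V)
    (X Y Z : V) (c s : K) :
  (forall u v, L (u + v) = L u + L v) -> (forall k u, L (k *: u) = k *: L u) ->
  L Z = Z -> L X = c *: X - s *: Y -> L Y = s *: X + c *: Y ->
  forall p a b q : K, L (p *: Z + a *: X + b *: Y + q *: Z) =
    p *: Z + (c * a + s * b) *: X + (- s * a + c * b) *: Y + q *: Z.
Proof.
move=> LD LZ LZfix LX LY p a b q; rewrite !LD !LZ LZfix LX LY.
rewrite -!addrA; congr (_ + _); rewrite !addrA; congr (_ + _).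
rewrite scalerBr scalerDr !scalerA addrACA -!scalerDl -scaleNr -scalerDl.
by congr (_ *: _ + _ *: _); ring.
Qed.

Section Rotation.
Variable R : realType.

Definition rot_x (phi : R) (ux uy : R -> R) t := cos phi * ux t + sin phi * uy t.
Definition rot_y (phi : R) (ux uy : R -> R) t := - sin phi * ux t + cos phi * uy t.

Let cos_halfE (phi : R) : cos phi = cos (phi / 2) ^+ 2 - sin (phi / 2) ^+ 2.
Proof. by rewrite [in LHS](splitr phi) cosD; ring. Qed.

Let sin_halfE (phi : R) : sin phi = 2 * sin (phi / 2) * cos (phi / 2).
Proof. by rewrite [in LHS](splitr phi) sinD; ring. Qed.

Lemma expiSzE (phi : R) : expiSz phi = diag_mx (\row_k expiSz phi k k).
Proof.
apply/matrixP => i j; rewrite !mxE.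
by case: eqVneq => [->|_]; rewrite ?eqxx /= ?mulr1n ?mulr0n.
Qed.

Lemma expiSz_mulN (phi : R) k : expiSz phi k k * expiSz (- phi) k k = 1.
Proof.
rewrite !mxE eqxx mulNr cosN sinN.
case: ifP => _; apply/eqP; rewrite eq_complex /=; apply/andP; split; apply/eqP.
all: by rewrite -?[RHS](cos2Dsin2 (phi / 2)); ring.
Qed.

Definition conj_expiSz (phi : R) (M : 'M[R[i]]_2) :=
  expiSz phi *m M *m expiSz (- phi).

Lemma conj_expiSzE phi (M : 'M[R[i]]_2) i j :
  conj_expiSz phi M i j = expiSz phi i i * M i j * expiSz (- phi) j j.
Proof.
rewrite /conj_expiSz [in LHS](expiSzE phi) [in LHS](expiSzE (- phi)).
by rewrite conj_diag_mxE !mxE.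
Qed.

Lemma conj_expiSzD phi (M N : 'M[R[i]]_2) :
  conj_expiSz phi (M + N) = conj_expiSz phi M + conj_expiSz phi N.
Proof. by rewrite /conj_expiSz mulmxDr mulmxDl. Qed.

Lemma conj_expiSzZ phi a (M : 'M[R[i]]_2) :
  conj_expiSz phi (a *: M) = a *: conj_expiSz phi M.
Proof. by rewrite /conj_expiSz -scalemxAr -scalemxAl. Qed.

Lemma conj_expiSz_sigma_z phi : conj_expiSz phi (sigma_z R) = sigma_z R.
Proof.
apply/matrixP => i j; rewrite conj_expiSzE mulrAC.
case: (eqVneq i j) => [<-|ij]; first by rewrite expiSz_mulN mul1r.
by rewrite [sigma_z R i j]mxE (negPf ij) !mulr0.
Qed.

Lemma conj_expiSz_sigma_x phi :
  conj_expiSz phi (sigma_x R) = (cos phi)%:C *: sigma_x R - (sin phi)%:C *: sigma_y R.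
Proof.
apply/matrixP => i j; rewrite conj_expiSzE !mxE !eqxx mulNr cosN sinN.
rewrite (cos_halfE phi) (sin_halfE phi).
case: i => [[|[|//]] ?]; case: j => [[|[|//]] ?] /=; simpc.
all: by apply/eqP; rewrite eq_complex /=; apply/andP; split; apply/eqP; ring.
Qed.

Lemma conj_expiSz_sigma_y phi :
  conj_expiSz phi (sigma_y R) = (sin phi)%:C *: sigma_x R + (cos phi)%:C *: sigma_y R.
Proof.
apply/matrixP => i j; rewrite conj_expiSzE !mxE !eqxx mulNr cosN sinN.
rewrite (cos_halfE phi) (sin_halfE phi).
case: i => [[|[|//]] ?]; case: j => [[|[|//]] ?] /=; simpc.
all: by apply/eqP; rewrite eq_complex /=; apply/andP; split; apply/eqP; ring.
Qed.

Lemma conj_expiSz_Sz phi : conj_expiSz phi (S_z R) = S_z R.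
Proof. by rewrite /S_z conj_expiSzZ conj_expiSz_sigma_z. Qed.

Lemma conj_expiSz_Sx phi :
  conj_expiSz phi (S_x R) = (cos phi)%:C *: S_x R - (sin phi)%:C *: S_y R.
Proof.
by rewrite /S_x /S_y conj_expiSzZ conj_expiSz_sigma_x scalerBr !scalerA !(mulrC 2^-1).
Qed.

Lemma conj_expiSz_Sy phi :
  conj_expiSz phi (S_y R) = (sin phi)%:C *: S_x R + (cos phi)%:C *: S_y R.
Proof.
by rewrite /S_x /S_y conj_expiSzZ conj_expiSz_sigma_y scalerDr !scalerA !(mulrC 2^-1).
Qed.

Lemma generator_conj_expiSz (w phi : R) (ux uy uz : R -> R) t :
  generator w (rot_x phi ux uy) (rot_y phi ux uy) uz t
  = conj_expiSz phi (generator w ux uy uz t).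
Proof.
have rxE : (rot_x phi ux uy t)%:C =
    (cos phi)%:C * (ux t)%:C + (sin phi)%:C * (uy t)%:C.
  by rewrite /rot_x rmorphD !rmorphM.
have ryE : (rot_y phi ux uy t)%:C =
    - (sin phi)%:C * (ux t)%:C + (cos phi)%:C * (uy t)%:C.
  by rewrite /rot_y rmorphD !rmorphM rmorphN.
rewrite /generator conj_expiSzZ rxE ryE.
by rewrite (rotate_xy_lincomb (conj_expiSzD phi) (@conj_expiSzZ phi)
  (conj_expiSz_Sz phi) (conj_expiSz_Sx phi) (conj_expiSz_Sy phi)).
Qed.

Lemma is_solution_conj_expiSz (w phi tf : R) (ux uy uz : R -> R) X :
  is_solution (generator w ux uy uz) tf X ->
  is_solution (generator w (rot_x phi ux uy) (rot_y phi ux uy) uz) tf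
    (fun t => conj_expiSz phi (X t)).
Proof.
move=> solX; rewrite /conj_expiSz (expiSzE phi) (expiSzE (- phi)).
apply: is_solution_conj_diag solX => [k | t].
  by rewrite mxE [Y in _ * Y]mxE expiSz_mulN.
by rewrite generator_conj_expiSz /conj_expiSz -(expiSzE phi) -(expiSzE (- phi)).
Qed.

Lemma admissible_rot (gamma phi : R) (ux uy uz : R -> R) :
  admissible gamma ux uy uz ->
  admissible gamma (rot_x phi ux uy) (rot_y phi ux uy) uz.
Proof.
case=> mx [my [mz bound]]; split; [|split; [|split=> // t]].
1,2: by apply: measurable_funD; apply: measurable_funM => //; exact: measurable_cst.
have -> : rot_x phi ux uy t ^+ 2 + rot_y phi ux uy t ^+ 2 =
          (cos phi ^+ 2 + sin phi ^+ 2) * (ux t ^+ 2 + uy t ^+ 2).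
  by rewrite /rot_x /rot_y; ring.
by rewrite cos2Dsin2 mul1r.
Qed.

End Rotation.

Theorem proposition1 (R : realType) (w0 gamma : R)
  (hw0 : 0 < w0) (hgamma : 0 < gamma)
  (Xf Xfh : 'M[R[i]]_2) (phi : R)
  (hXf : SU2 Xf) (hXfh : SU2 Xfh)
  (hphi : Xfh = expiSz phi *m Xf *m expiSz (- phi))
  (tf : R) (htf : 0 <= tf)
  (ux uy uz : R -> R) (hu : admissible gamma ux uy uz)
  (X1 X2 : R -> 'M[R[i]]_2)
  (hX1 : is_solution (generator w0 ux uy uz) tf X1)
  (hX2 : is_solution (generator (- w0) ux uy uz) tf X2)
  (hX1f : X1 tf = Xf \/ X1 tf = - Xf)
  (hX2f : X2 tf = Xf \/ X2 tf = - Xf) :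
  exists hux huy huz : R -> R,
    admissible gamma hux huy huz /\
    exists Y1 Y2 : R -> 'M[R[i]]_2,
      is_solution (generator w0 hux huy huz) tf Y1 /\
      is_solution (generator (- w0) hux huy huz) tf Y2 /\
      (Y1 tf = Xfh \/ Y1 tf = - Xfh) /\
      (Y2 tf = Xfh \/ Y2 tf = - Xfh).
Proof.
exists (rot_x phi ux uy), (rot_y phi ux uy), uz; split; first exact: admissible_rot.
exists (fun t => conj_expiSz phi (X1 t)), (fun t => conj_expiSz phi (X2 t)).
do 2 (split; first exact: is_solution_conj_expiSz).
have conj_pm (X : 'M[R[i]]_2) :
    X = Xf \/ X = - Xf -> conj_expiSz phi X = Xfh \/ conj_expiSz phi X = - Xfh.
  by rewrite hphi /conj_expiSz; case=> ->; [left | right; rewrite mulmxN mulNmx].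
by split; apply: conj_pm.
Qed.
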